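(* A frame $L$ is subfit if and only if every exact filter of $L$ is regular, i.e. $\mathsf{Ex}(L)\subseteq\mathsf R(L)$.
   Context: A frame is a complete lattice $L$ with $(\bigvee A)\wedge b=\bigvee_{a\in A}(a\wedge b)$. $L$ is subfit if for all $a,b$: whenever ($\forall c$, $a\vee c=1\Rightarrow b\vee c=1$) then $a\le b$. A filter is a nonempty up-closed subset closed under finite meets. A meet $\bigwedge M$ is exact if $(\bigwedge M)\vee b=\bigwedge_{a\in M}(a\vee b)$ for all $b$; an exact filter contains every exact meet of its subsets; $\mathsf{Ex}(L)$ is the set of exact filters. A filter is regular if it is of the form $\{x\in L\mid\forall b\in G,\ b\vee x=1\}$ for some filter $G$; $\mathsf R(L)$ is the set of regular filters. *)

Record Frame := {
  carrier :> Type;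
  fle : carrier -> carrier -> Prop;
  fle_refl : forall a, fle a a;
  fle_trans : forall a b c, fle a b -> fle b c -> fle a c;
  fle_antisym : forall a b, fle a b -> fle b a -> a = b;
  fsup : (carrier -> Prop) -> carrier;
  fsup_ub : forall (A : carrier -> Prop) a, A a -> fle a (fsup A);
  fsup_least : forall (A : carrier -> Prop) b,
      (forall a, A a -> fle a b) -> fle (fsup A) b;
  fmeet : carrier -> carrier -> carrier;
  fmeet_lb1 : forall a b, fle (fmeet a b) a;
  fmeet_lb2 : forall a b, fle (fmeet a b) b;
  fmeet_glb : forall a b c, fle c a -> fle c b -> fle c (fmeet a b);
  fdistr : forall (A : carrier -> Prop) b,
      fmeet (fsup A) b = fsup (fun c => exists a, A a /\ c = fmeet a b)
}.

Arguments fle {f} _ _.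
Arguments fsup {f} _.
Arguments fmeet {f} _ _.

Section FrameNotions.
Variable L : Frame.

Definition fjoin (a b : L) : L := fsup (fun c => c = a \/ c = b).
Definition ftop : L := fsup (fun _ => True).
Definition finf (M : L -> Prop) : L :=
  fsup (fun c => forall a, M a -> fle c a).

Definition subfit : Prop :=
  forall a b : L,
    (forall c : L, fjoin a c = ftop -> fjoin b c = ftop) -> fle a b.

Definition is_filter (F : L -> Prop) : Prop :=
  (exists x, F x) /\
  (forall x y, F x -> fle x y -> F y) /\
  (forall x y, F x -> F y -> F (fmeet x y)).

Definition exact_meet (M : L -> Prop) : Prop :=
  forall b : L,
    fjoin (finf M) b = finf (fun c => exists a, M a /\ c = fjoin a b).

Definition exact_filter (F : L -> Prop) : Prop :=
  is_filter F /\
  forall M : L -> Prop, (forall a, M a -> F a) -> exact_meet M -> F (finf M).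

Definition regular_filter (F : L -> Prop) : Prop :=
  exists G : L -> Prop, is_filter G /\
    forall x : L, F x <-> (forall b, G b -> fjoin b x = ftop).

End FrameNotions.

(* For a set S let S* be the set of x with s ∨ x = 1 for all s ∈ S; the
   regular filters are the sets G* with G a filter, and F ⊆ F** always.
   Subfitness says exactly that a ≤ b as soon as {a}* ⊆ {b}*, and it yields
   inf S ≤ y whenever y ∈ S**.  Given an exact filter F and x ∈ F**, the set
   M = {f ∨ x | f ∈ F} lies in F, has meet x, and (M ∨ b)** contains x ∨ b
   for every b, which makes that meet exact; hence x ∈ F and F = F** is
   regular.  Conversely a principal filter ↑a is exact, so if it is regular,
   ↑a = G*, and {a}* ⊆ {b}* forces b ∈ G* = ↑a. *)


Section Annihilators.
Variable L : Frame.
Arguments fjoin {L}.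
Arguments ftop {L}.
Arguments finf {L}.

Lemma fjoin_l (a b : L) : fle a (fjoin a b).
Proof. apply fsup_ub; now left. Qed.

Lemma fjoin_r (a b : L) : fle b (fjoin a b).
Proof. apply fsup_ub; now right. Qed.

Lemma fjoin_lub (a b c : L) : fle a c -> fle b c -> fle (fjoin a b) c.
Proof. intros Hac Hbc; apply fsup_least; now intros x [-> | ->]. Qed.

Lemma fle_joinl (a b c : L) : fle a b -> fle a (fjoin b c).
Proof. intros H; eapply fle_trans; [exact H | apply fjoin_l]. Qed.

Lemma fle_joinr (a b c : L) : fle a c -> fle a (fjoin b c).
Proof. intros H; eapply fle_trans; [exact H | apply fjoin_r]. Qed.

Ltac fle_leaf := solve [apply fle_refl | assumption | apply fle_joinl; fle_leaf
                        | apply fle_joinr; fle_leaf].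
Ltac fjoin_solve := repeat apply fjoin_lub; fle_leaf.

Lemma fjoin_comm (a b : L) : fjoin a b = fjoin b a.
Proof. apply fle_antisym; fjoin_solve. Qed.

Lemma fjoin_idem (a : L) : fjoin a a = a.
Proof. apply fle_antisym; [fjoin_solve | apply fjoin_l]. Qed.

Lemma fle_top (x : L) : fle x ftop.
Proof. now apply fsup_ub. Qed.

Lemma top_le_eq (x y : L) : x = ftop -> fle x y -> y = ftop.
Proof. intros -> H; apply fle_antisym; [apply fle_top | exact H]. Qed.

Lemma finf_lb (M : L -> Prop) a : M a -> fle (finf M) a.
Proof. intros Ha; apply fsup_least; auto. Qed.

Lemma finf_glb (M : L -> Prop) c : (forall a, M a -> fle c a) -> fle c (finf M).
Proof. intros H; now apply fsup_ub. Qed.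

Lemma fmeet_fsup_le (A : L -> Prop) y z :
  (forall a, A a -> fle (fmeet a y) z) -> fle (fmeet (fsup A) y) z.
Proof.
  intros H; rewrite fdistr; apply fsup_least.
  intros c [a [Ha ->]]; auto.
Qed.

(* c ≤ (a ∨ b) ∧ c = (a ∧ c) ∨ (b ∧ c) ≤ a ∨ (b ∧ c) *)
Lemma fjoin_fmeet_top (a b c : L) :
  fjoin a b = ftop -> fjoin a c = ftop -> fjoin a (fmeet b c) = ftop.
Proof.
  intros Hab Hac; apply (top_le_eq _ _ Hac), fjoin_lub; [apply fjoin_l |].
  apply fle_trans with (fmeet (fjoin a b) c).
  { apply fmeet_glb; [rewrite Hab; apply fle_top | apply fle_refl]. }
  apply fmeet_fsup_le; intros d [-> | ->].
  - apply fle_joinl, fmeet_lb1.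
  - apply fle_joinr, fmeet_glb; [apply fmeet_lb1 | apply fmeet_lb2].
Qed.

Definition ann (S : L -> Prop) (x : L) : Prop :=
  forall s, S s -> fjoin s x = ftop.

Definition joinset (S : L -> Prop) (b : L) : L -> Prop :=
  fun c => exists a, S a /\ c = fjoin a b.

Lemma ann_is_filter (S : L -> Prop) : is_filter L (ann S).
Proof.
  split; [| split].
  - exists ftop; intros s _; apply fle_antisym; [apply fle_top | apply fjoin_r].
  - intros x y Hx Hxy s Hs; apply (top_le_eq _ _ (Hx s Hs)); fjoin_solve.
  - intros x y Hx Hy s Hs; apply fjoin_fmeet_top; auto.
Qed.

Lemma ann_ann_sub (S : L -> Prop) x : S x -> ann (ann S) x.
Proof. intros Hx g Hg; apply (top_le_eq _ _ (Hg x Hx)); fjoin_solve. Qed.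

Lemma ann_ann_joinset (S : L -> Prop) y b :
  ann (ann S) y -> ann (ann (joinset S b)) (fjoin y b).
Proof.
  intros Hy g Hg.
  assert (Hbg : ann S (fjoin b g)).
  { intros s Hs; apply (top_le_eq _ _ (Hg (fjoin s b) (ex_intro _ s (conj Hs eq_refl)))).
    fjoin_solve. }
  apply (top_le_eq _ _ (Hy _ Hbg)); fjoin_solve.
Qed.

Hypothesis L_subfit : subfit L.

Lemma subfit_finf_le (S : L -> Prop) y : ann (ann S) y -> fle (finf S) y.
Proof.
  intros Hy; apply L_subfit; intros c Hc.
  assert (Hyc : ann S (fjoin y c)).
  { intros s Hs; apply (top_le_eq _ _ Hc), fjoin_lub.
    - apply fle_joinl, finf_lb, Hs.
    - fjoin_solve. }
  apply (top_le_eq _ _ (Hy _ Hyc)); fjoin_solve.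
Qed.

Lemma subfit_exact_meet (M : L -> Prop) : ann (ann M) (finf M) -> exact_meet L M.
Proof.
  intros HM b; change (fjoin (finf M) b = finf (joinset M b)).
  apply fle_antisym.
  - apply finf_glb; intros c [a [Ha ->]].
    apply fjoin_lub; [apply fle_joinl, finf_lb, Ha | apply fjoin_r].
  - apply subfit_finf_le, ann_ann_joinset, HM.
Qed.

Lemma subfit_exact_filter_ann_ann (F : L -> Prop) x :
  exact_filter L F -> ann (ann F) x -> F x.
Proof.
  intros [[_ [F_up _]] F_exact] Hx.
  set (M := joinset F x).
  assert (M_sub : forall a, M a -> F a).
  { intros a [f [Hf ->]]; apply (F_up f); [exact Hf | apply fjoin_l]. }
  assert (HMx : ann (ann M) x).
  { rewrite <- (fjoin_idem x); apply ann_ann_joinset, Hx. }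
  assert (M_inf : finf M = x).
  { apply fle_antisym; [now apply subfit_finf_le |].
    apply finf_glb; intros a [f [_ ->]]; apply fjoin_r. }
  rewrite <- M_inf; apply F_exact; [exact M_sub |].
  apply subfit_exact_meet; now rewrite M_inf.
Qed.

End Annihilators.

Lemma principal_exact_filter (L : Frame) (a : L) : exact_filter L (fle a).
Proof.
  split; [split; [| split] |].
  - exists a; apply fle_refl.
  - intros x y Hx Hxy; eapply fle_trans; eauto.
  - intros x y Hx Hy; now apply fmeet_glb.
  - intros M HM _; now apply finf_glb.
Qed.

Theorem mainTheorem10 (L : Frame) :
  subfit L <-> (forall F : L -> Prop, exact_filter L F -> regular_filter L F).
Proof.
  split.
  - intros Hsub F HF; exists (ann L F); split; [apply ann_is_filter |].
    intros x; split.
    + apply ann_ann_sub.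
    + now apply subfit_exact_filter_ann_ann.
  - intros Hreg a b Hab.
    destruct (Hreg _ (principal_exact_filter L a)) as [G [_ HG]].
    apply HG; intros g Hg.
    rewrite fjoin_comm; apply Hab; rewrite <- fjoin_comm.
    exact (proj1 (HG a) (fle_refl _ a) g Hg).
Qed.
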